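(* Let $S$ be a finite inverse semigroup and let $\langle\cdot,\cdot\rangle$ be the sesquilinear form on $\mathbb{C}S$ determined by $$\langle\lfloor s\rfloor,\lfloor t\rfloor\rangle=\begin{cases}1 & \text{if } s=t,\\ 0 & \text{otherwise,}\end{cases}\qquad s,t\in S.$$ Then the isotypic subspaces of $\mathbb{C}S$ are mutually orthogonal with respect to $\langle\cdot,\cdot\rangle$.
   Context: **Inverse semigroups.** $S$ is a finite inverse semigroup: every $x\in S$ has a unique $x^{-1}$ with $xx^{-1}x=x$ and $x^{-1}xx^{-1}=x^{-1}$. **Groupoid basis.** The natural partial order is $t\le s$ iff $t=es$ for some idempotent $e\in S$, with Möbius function $\mu$. The groupoid basis of $\mathbb{C}S$ is $\{\lfloor s\rfloor\}_{s\in S}$, where $\lfloor s\rfloor=\sum_{t\le s}\mu(t,s)t$. **Isotypic subspaces.** $\mathbb{C}S$ is semisimple. Its isotypic subspaces are the isotypic components of $\mathbb{C}S$ as a left module over itself: for each irreducible representation, the sum of all simple left ideals isomorphic to it. Equivalently, they are the minimal two-sided ideals of $\mathbb{C}S$. *)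

From mathcomp Require Import all_boot all_order all_algebra.
From mathcomp Require Import algC.
Set Implicit Arguments. Unset Strict Implicit. Unset Printing Implicit Defensive.
Import Order.TTheory GRing.Theory Num.Theory.
Local Open Scope ring_scope.

Section InvSemigroup.
Variables (S : finType) (mul : S -> S -> S).


Definition is_inverse_semigroup : Prop :=
  associative mul /\
  forall x, exists! y, mul (mul x y) x = x /\ mul (mul y x) y = y.

Definition idempotent_el (e : S) : bool := mul e e == e.

Definition nat_le (t s : S) : bool :=
  [exists e, idempotent_el e && (t == mul e s)].

Definition nat_lt (t s : S) : bool := (t != s) && nat_le t s.

(* Recursion is on a fuel argument; fuel #|S| exceeds every chain length. *)
Fixpoint mobius_fuel (n : nat) (t s : S) : algC :=
  match n with
  | 0 => (t == s)%:R
  | n'.+1 =>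
      if t == s then 1
      else if nat_le t s then
        - \sum_(u | nat_le t u && nat_lt u s) mobius_fuel n' t u
      else 0
  end.

Definition mobius (t s : S) : algC := mobius_fuel #|S| t s.

(* The semigroup algebra CS: functions S -> C, point masses = elements of S. *)
Local Notation CS := {ffun S -> algC}.

Definition delta (s : S) : CS := [ffun u => (u == s)%:R].

Definition cs_mul (a b : CS) : CS :=
  [ffun u => \sum_(p : S * S | mul p.1 p.2 == u) a p.1 * b p.2].

(* groupoid basis element floor(s) = sum_{t <= s} mu(t,s) t *)
Definition gbasis (s : S) : CS :=
  [ffun u => if nat_le u s then mobius u s else 0].

Definition cs_scale (c : algC) (x : CS) : CS := [ffun u => c * x u].

Definition two_sided_ideal (I : CS -> Prop) : Prop :=
  [/\ I 0,
      (forall x y, I x -> I y -> I (x + y)),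
      (forall (c : algC) x, I x -> I (cs_scale c x)),
      (forall a x, I x -> I (cs_mul a x)) &
      (forall a x, I x -> I (cs_mul x a))].

Definition minimal_two_sided_ideal (I : CS -> Prop) : Prop :=
  [/\ two_sided_ideal I,
      (exists x, I x /\ x != 0) &
      (forall J, two_sided_ideal J -> (forall x, J x -> I x) ->
         (forall x, J x -> x = 0) \/ (forall x, I x -> J x))].

Definition sesquilinear (B : CS -> CS -> algC) : Prop :=
  (forall (c : algC) x y z, B (cs_scale c x + y) z = c * B x z + B y z) /\
  (forall (c : algC) x y z, B x (cs_scale c y + z) = c^* * B x y + B x z).

End InvSemigroup.

From mathcomp Require Import all_boot all_order all_algebra.
From mathcomp Require Import algC.
Set Implicit Arguments. Unset Strict Implicit. Unset Printing Implicit Defensive.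
Import Order.TTheory GRing.Theory Num.Theory.
Local Open Scope ring_scope.

(* By Moebius inversion, [x = sum_t c_t floor(t)] with [c_t = sum_(s >= t) x s],
   so [<x, y> = sum_t c_t(x) c_t(y)^*] and the form is positive definite.
   Counting common lower bounds turns this into [<x, y> = tau (y^* x)] for the
   involution [x^* s = (x (s^-1))^*] and the functional
   [tau c = sum_s c s * #{idempotents below s}].  A minimal two-sided ideal [I]
   is then closed under [^*]: otherwise [I] meets [I^*] trivially, and for
   [0 <> x] in [I] the element [x^* x] lies in both, so [<x, x> = tau (x^* x) = 0].
   Distinct minimal ideals [I], [J] meet trivially, so for [x] in [I] and [y]
   in [J] the element [y^* x] lies in [J] and [I], whence [<x, y> = 0]. *)

Section InverseSemigroup.
Variables (S : finType) (mul : S -> S -> S).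
Hypothesis HS : is_inverse_semigroup mul.
Local Infix "·" := mul (at level 40, left associativity).
Local Notation idem e := (e · e = e).
Local Notation le := (nat_le mul).

Let mulA : associative mul := HS.1.
Local Ltac reassoc T := transitivity T; [by rewrite ?mulA|].

Definition sinv (x : S) : S :=
  odflt x [pick y | (x · y · x == x) && (y · x · y == y)].

Lemma sinvP x : x · sinv x · x = x /\ sinv x · x · sinv x = sinv x.
Proof.
rewrite /sinv; case: pickP => [y /andP[/eqP -> /eqP ->] //|noinv].
case: (HS.2 x) => y [[xyx yxy] _].
by have := noinv y; rewrite xyx yxy !eqxx.
Qed.

Lemma mul_sinvK x : x · sinv x · x = x. Proof. exact: (sinvP x).1. Qed.
Lemma sinv_mulK x : sinv x · x · sinv x = sinv x. Proof. exact: (sinvP x).2. Qed.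

Lemma sinv_uniq x y : x · y · x = x -> y · x · y = y -> y = sinv x.
Proof.
move=> xyx yxy; case: (HS.2 x) => z [_ uniq_z].
by rewrite -(uniq_z y (conj xyx yxy)) -(uniq_z (sinv x) (sinvP x)).
Qed.

Lemma sinvK x : sinv (sinv x) = x.
Proof. by symmetry; apply: sinv_uniq; [apply: sinv_mulK | apply: mul_sinvK]. Qed.

Lemma sinv_idem e : idem e -> sinv e = e.
Proof. by move=> he; symmetry; apply: sinv_uniq; rewrite !he. Qed.

Lemma idem_mul_sinv x : idem (x · sinv x).
Proof. by reassoc (x · sinv x · x · sinv x); rewrite mul_sinvK. Qed.

Lemma idem_sinv_mul x : idem (sinv x · x).
Proof. by reassoc (sinv x · x · sinv x · x); rewrite sinv_mulK. Qed.

(* The inverse [a'] of [a = e f] is idempotent, since [a' = f a' e]. *)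
Lemma idemM e f : idem e -> idem f -> idem (e · f).
Proof.
move=> he hf; set a := e · f; set a' := sinv a.
have a'E : f · a' · e = a'.
  apply: sinv_uniq.
  - reassoc (e · (f · f) · a' · (e · e) · f); rewrite he hf.
    by reassoc (a · a' · a); rewrite mul_sinvK.
  - reassoc (f · a' · (e · e) · (f · f) · a' · e); rewrite he hf.
    by reassoc (f · (a' · a · a') · e); rewrite sinv_mulK.
have idem_a' : idem a'.
  by rewrite -{1}a'E -{2}a'E; reassoc (f · (a' · a · a') · e); rewrite sinv_mulK.
by rewrite -[a]sinvK -/a' (sinv_idem idem_a').
Qed.

Lemma idemC e f : idem e -> idem f -> e · f = f · e.
Proof.
move=> he hf; rewrite -(sinv_idem (idemM he hf)); symmetry; apply: sinv_uniq.
- reassoc (e · (f · f) · (e · e) · f); rewrite he hf.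
  by reassoc ((e · f) · (e · f)); apply: idemM.
- reassoc (f · (e · e) · (f · f) · e); rewrite he hf.
  by reassoc ((f · e) · (f · e)); apply: idemM.
Qed.

Lemma sinvM x y : sinv (x · y) = sinv y · sinv x.
Proof.
symmetry; apply: sinv_uniq.
- reassoc (x · ((y · sinv y) · (sinv x · x)) · y).
  rewrite (idemC (idem_mul_sinv y) (idem_sinv_mul x)).
  by reassoc ((x · sinv x · x) · (y · sinv y · y)); rewrite !mul_sinvK.
- reassoc (sinv y · ((sinv x · x) · (y · sinv y)) · sinv x).
  rewrite (idemC (idem_sinv_mul x) (idem_mul_sinv y)).
  by reassoc ((sinv y · y · sinv y) · (sinv x · x · sinv x)); rewrite !sinv_mulK.
Qed.

Lemma nat_leP t s : reflect (exists2 e, idem e & t = e · s) (le t s).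
Proof.
apply: (iffP existsP) => [[e /andP[/eqP he /eqP ->]]|[e he ->]]; first by exists e.
by exists e; rewrite /idempotent_el he !eqxx.
Qed.

Lemma nat_le_refl s : le s s.
Proof. by apply/nat_leP; exists (s · sinv s); rewrite ?mul_sinvK ?idem_mul_sinv. Qed.

Lemma nat_le_trans t s r : le t s -> le s r -> le t r.
Proof.
move=> /nat_leP[e he ->] /nat_leP[f hf ->].
by apply/nat_leP; exists (e · f); [exact: idemM | rewrite mulA].
Qed.

Lemma nat_le_anti t s : le t s -> le s t -> t = s.
Proof.
move=> /nat_leP[e he tE] /nat_leP[f hf sE].
have sE' : s = e · f · s by rewrite (idemC he hf) -mulA -tE.
rewrite tE; transitivity (e · (e · f · s)); first by rewrite -sE'.
by reassoc (e · e · f · s); rewrite he -sE'.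
Qed.

Lemma nat_le_mulr f s : idem f -> le (s · f) s.
Proof.
move=> hf; apply/nat_leP; exists (s · f · sinv s).
  reassoc (s · (f · (sinv s · s)) · f · sinv s).
  rewrite (idemC hf (idem_sinv_mul s)).
  by reassoc ((s · sinv s · s) · (f · f) · sinv s); rewrite mul_sinvK hf.
symmetry; reassoc (s · (f · (sinv s · s))); rewrite (idemC hf (idem_sinv_mul s)).
by reassoc (s · sinv s · s · f); rewrite mul_sinvK.
Qed.

Lemma nat_le_sinv_mulr t s : le t s -> t = s · (sinv t · t).
Proof.
move=> /nat_leP[e he ->]; rewrite sinvM (sinv_idem he); symmetry.
reassoc (s · sinv s · (e · e) · s); rewrite he -(idemC he (idem_mul_sinv s)).
by reassoc (e · (s · sinv s · s)); rewrite mul_sinvK.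
Qed.

Lemma nat_le_sinv_mul u a : le u a -> sinv a · a · (sinv u · u) = sinv u · u.
Proof.
move=> /nat_leP[e he ->]; rewrite sinvM (sinv_idem he).
by reassoc (sinv a · a · sinv a · (e · e) · a); rewrite sinv_mulK mulA.
Qed.

Lemma lower_bound_idem u a b :
  le u a -> le u b -> le (sinv u · u) (sinv a · b).
Proof.
move=> ua ub.
have -> : sinv u · u = sinv a · b · (sinv u · u).
  rewrite -{1}(nat_le_sinv_mul ua) -!mulA.
  by rewrite -(nat_le_sinv_mulr ua) -(nat_le_sinv_mulr ub).
exact/nat_le_mulr/idem_sinv_mul.
Qed.

Lemma idem_lower_bound e a b : idem e -> le e (sinv a · b) ->
  [/\ le (a · e) a, le (a · e) b & sinv (a · e) · (a · e) = e].
Proof.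
move=> he le_e; have eE : e = sinv a · b · e.
  by rewrite {1}(nat_le_sinv_mulr le_e) (sinv_idem he) he.
split; first exact: nat_le_mulr.
- apply: (@nat_le_trans _ (b · e)); last exact: nat_le_mulr.
  apply/nat_leP; exists (a · sinv a); first exact: idem_mul_sinv.
  by rewrite {1}eE !mulA.
- rewrite sinvM (sinv_idem he).
  reassoc (e · (sinv a · a) · e); rewrite (idemC he (idem_sinv_mul a)).
  reassoc (sinv a · a · (e · e)); rewrite he {1}eE.
  by reassoc (sinv a · a · sinv a · b · e); rewrite sinv_mulK -eE.
Qed.

(* The bijection is [u |-> u^-1 u], with inverse [e |-> a e]. *)
Lemma card_common_lower_bounds a b :
  #|[set u | le u a && le u b]| =
  #|[set e | idempotent_el mul e && le e (sinv a · b)]|.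
Proof.
set U := [set u | _]; set E := [set e | _].
have -> : E = [set sinv u · u | u in U].
  apply/setP=> e; rewrite inE; apply/idP/imsetP.
  - case/andP=> /eqP he le_e; have [ea eb eE] := idem_lower_bound he le_e.
    by exists (a · e); rewrite ?inE ?ea ?eb.
  - case=> u; rewrite inE => /andP[ua ub] ->.
    by rewrite /idempotent_el idem_sinv_mul eqxx lower_bound_idem.
symmetry; apply: card_in_imset => u v; rewrite !inE => /andP[ua _] /andP[va _] uv.
by rewrite (nat_le_sinv_mulr ua) (nat_le_sinv_mulr va) uv.
Qed.

End InverseSemigroup.

Section Mobius.
Variables (S : finType) (mul : S -> S -> S).
Local Notation le := (nat_le mul).
Local Notation lt := (nat_lt mul).
Hypothesis le_refl : forall s, le s s.
Hypothesis le_trans : forall t s r, le t s -> le s r -> le t r.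
Hypothesis le_anti : forall t s, le t s -> le s t -> t = s.

Definition interval_card (u s : S) : nat := #|[set t | le u t && lt t s]|.

Lemma interval_card_lt u t s : le u t -> lt t s ->
  (interval_card u t < interval_card u s)%N.
Proof.
move=> ut /andP[ts_neq ts]; apply/proper_card/properP; split.
  apply/subsetP=> v; rewrite !inE => /andP[-> /andP[vt_neq vt]] /=.
  rewrite /nat_lt (le_trans vt ts) andbT.
  by apply: contraNneq ts_neq => vs; apply/eqP/le_anti; rewrite // -vs.
by exists t; rewrite inE ?ut /nat_lt ?ts_neq ?ts // eqxx andbF.
Qed.

Lemma interval_card_lt_card u s : (interval_card u s < #|S|)%N.
Proof.
have card_gt0 : (0 < #|S|)%N by apply/card_gt0P; exists s.
rewrite -(prednK card_gt0) ltnS -(cardsC1 s) subset_leq_card //.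
by apply/subsetP=> v; rewrite !inE => /andP[_ /andP[]].
Qed.

Lemma mobius_fuel_stable n m u s :
  (interval_card u s < n)%N -> (interval_card u s < m)%N ->
  mobius_fuel mul n u s = mobius_fuel mul m u s.
Proof.
elim: n m u s => [|n IH] [|m] u s //= ltn ltm.
case: (u == s) => //; case: (le u s) => //; congr (- _).
apply: eq_bigr => t /andP[ut ts]; have lt_card := interval_card_lt ut ts.
by apply: IH; apply: leq_trans lt_card _.
Qed.

Lemma mobius_rec u s : u != s -> le u s ->
  mobius mul u s = - \sum_(t | le u t && lt t s) mobius mul u t.
Proof.
move=> us_neq us; have card_gt0 : (0 < #|S|)%N by apply/card_gt0P; exists s.
rewrite {1}/mobius -(prednK card_gt0) /= (negbTE us_neq) us; congr (- _).
apply: eq_bigr => t /andP[ut ts].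
apply: mobius_fuel_stable; last exact: interval_card_lt_card.
rewrite -ltnS (prednK card_gt0).
exact: leq_ltn_trans (interval_card_lt ut ts) (interval_card_lt_card u s).
Qed.

Lemma mobius_refl u : mobius mul u u = 1.
Proof. by rewrite /mobius; case: #|S| => [|n] /=; rewrite eqxx. Qed.

Lemma sum_mobius u s :
  \sum_(t | le u t && le t s) mobius mul u t = (u == s)%:R.
Proof.
have [<-|us_neq] := eqVneq u s.
  rewrite (big_pred1 u) ?mobius_refl // => t /=.
  by apply/andP/eqP => [[ut tu]|->]; [exact: le_anti | rewrite le_refl].
case us: (le u s); last first.
  by rewrite big1 // => t /andP[ut ts]; rewrite (le_trans ut ts) in us.
rewrite (bigD1 s) /=; last by rewrite us le_refl.
rewrite mobius_rec // addrC.
rewrite (eq_bigl (fun t => le u t && lt t s)) ?subrr // => t.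
by rewrite /nat_lt; case: (le u t); rewrite //= andbC.
Qed.

End Mobius.

Local Notation CS S := {ffun S -> algC}.

Section SesquilinearForm.
Variables (S : finType) (B : CS S -> CS S -> algC).
Hypothesis HB : sesquilinear B.

Lemma cs_scale1 (x : CS S) : cs_scale 1 x = x.
Proof. by apply/ffunP => u; rewrite ffunE mul1r. Qed.

Lemma cs_scale0 c : cs_scale c (0 : CS S) = 0.
Proof. by apply/ffunP => u; rewrite !ffunE mulr0. Qed.

Lemma form0l z : B 0 z = 0.
Proof.
have := HB.1 1 0 0 z; rewrite cs_scale0 addr0 mul1r => B0.
by apply: (@addrI _ (B 0 z)); rewrite -B0 addr0.
Qed.

Lemma formDl x y z : B (x + y) z = B x z + B y z.
Proof. by have := HB.1 1 x y z; rewrite cs_scale1 mul1r. Qed.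

Lemma formZl c x z : B (cs_scale c x) z = c * B x z.
Proof. by have := HB.1 c x 0 z; rewrite addr0 form0l addr0. Qed.

Lemma form0r z : B z 0 = 0.
Proof.
have := HB.2 1 z 0 0; rewrite cs_scale0 addr0 rmorph1 mul1r => B0.
by apply: (@addrI _ (B z 0)); rewrite -B0 addr0.
Qed.

Lemma formDr x y z : B z (x + y) = B z x + B z y.
Proof. by have := HB.2 1 z x y; rewrite cs_scale1 rmorph1 mul1r. Qed.

Lemma formZr c x z : B z (cs_scale c x) = c^* * B z x.
Proof. by have := HB.2 c z x 0; rewrite addr0 form0r addr0. Qed.

End SesquilinearForm.

Section GroupoidBasis.
Variables (S : finType) (mul : S -> S -> S).
Hypothesis HS : is_inverse_semigroup mul.
Local Notation le := (nat_le mul).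

(* By Moebius inversion, the coordinate of [x] on [gbasis mul t]. *)
Definition gcoord (x : CS S) (t : S) : algC := \sum_(s | le t s) x s.

Lemma gbasis_expansion (x : CS S) :
  x = \sum_t cs_scale (gcoord x t) (gbasis mul t).
Proof.
apply/ffunP => u; rewrite sum_ffunE.
transitivity (\sum_s x s * (u == s)%:R).
  rewrite (bigD1 u) //= eqxx mulr1 big1 ?addr0 // => s.
  by rewrite eq_sym => /negbTE ->; rewrite mulr0.
under eq_bigr => s _ do
  rewrite -(sum_mobius (nat_le_refl HS) (@nat_le_trans _ _ HS) (@nat_le_anti _ _ HS))
          mulr_sumr big_mkcond.
rewrite exchange_big; apply: eq_bigr => t _.
rewrite !ffunE /gcoord mulr_suml [RHS]big_mkcond; apply: eq_bigr => s _.
by case: (le u t); case: (le t s); rewrite /= ?mulr0 ?mul0r.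
Qed.

Variable B : CS S -> CS S -> algC.
Hypothesis HB : sesquilinear B.
Hypothesis B_gbasis : forall s t, B (gbasis mul s) (gbasis mul t) = (s == t)%:R.

Lemma form_gcoordE x y : B x y = \sum_t gcoord x t * (gcoord y t)^*.
Proof.
rewrite [in LHS](gbasis_expansion x) [in LHS](gbasis_expansion y).
rewrite (big_morph (B^~ _) (fun a b => formDl HB a b _) (form0l HB _)).
apply: eq_bigr => t _; rewrite formZl //; congr (_ * _).
rewrite (big_morph (B _) (fun a b => formDr HB a b _) (form0r HB _)).
rewrite (bigD1 t) //= formZr // B_gbasis eqxx mulr1 big1 ?addr0 // => t' t'_neq.
by rewrite formZr // B_gbasis eq_sym (negbTE t'_neq) mulr0.
Qed.

Lemma form_definite x : B x x = 0 -> x = 0.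
Proof.
rewrite form_gcoordE => /psumr_eq0P gcoord0.
rewrite (gbasis_expansion x); apply: big1 => t _.
have : gcoord x t * (gcoord x t)^* == 0.
  by apply/eqP/gcoord0 => // i _; apply: mul_conjC_ge0.
rewrite mul_conjC_eq0 => /eqP ->.
by apply/ffunP => u; rewrite !ffunE mul0r.
Qed.

End GroupoidBasis.

Section Involution.
Variables (S : finType) (mul : S -> S -> S).
Hypothesis HS : is_inverse_semigroup mul.
Local Notation le := (nat_le mul).
Local Notation sinv := (sinv mul).

Definition cs_star (x : CS S) : CS S := [ffun s => (x (sinv s))^*].

Lemma cs_starK : involutive cs_star.
Proof. by move=> x; apply/ffunP => s; rewrite !ffunE sinvK // conjCK. Qed.

Lemma cs_star0 : cs_star 0 = 0.
Proof. by apply/ffunP => s; rewrite !ffunE rmorph0. Qed.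

Lemma cs_starD x y : cs_star (x + y) = cs_star x + cs_star y.
Proof. by apply/ffunP => s; rewrite !ffunE rmorphD. Qed.

Lemma cs_starZ c x : cs_star (cs_scale c x) = cs_scale c^* (cs_star x).
Proof. by apply/ffunP => s; rewrite !ffunE rmorphM. Qed.

Lemma cs_star_mul a b :
  cs_star (cs_mul mul a b) = cs_mul mul (cs_star b) (cs_star a).
Proof.
apply/ffunP => s; rewrite !ffunE rmorph_sum.
have swap_inj : injective (fun q : S * S => (sinv q.2, sinv q.1)).
  by move=> [q1 q2] [r1 r2] [] /(can_inj (sinvK HS)) -> /(can_inj (sinvK HS)) ->.
rewrite [RHS](reindex_inj swap_inj) /=; apply: eq_big => [[p1 p2]|[p1 p2] _] /=.
  by rewrite -(sinvM HS) (can2_eq (sinvK HS) (sinvK HS)).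
by rewrite !ffunE !sinvK // rmorphM mulrC.
Qed.

Definition idem_trace (c : CS S) : algC :=
  \sum_s c s * #|[set e | idempotent_el mul e && le e s]|%:R.

Lemma idem_trace0 : idem_trace 0 = 0.
Proof. by apply: big1 => s _; rewrite ffunE mul0r. Qed.

Variable B : CS S -> CS S -> algC.
Hypothesis HB : sesquilinear B.
Hypothesis B_gbasis : forall s t, B (gbasis mul s) (gbasis mul t) = (s == t)%:R.

(* Both sides equal [sum_(a, b) (x a)^* * y b * #{u | u <= a, u <= b}]. *)
Lemma form_traceE x y : B y x = idem_trace (cs_mul mul (cs_star x) y).
Proof.
transitivity (\sum_a \sum_b
    (x a)^* * y b * #|[set u | le u a && le u b]|%:R).
  rewrite (form_gcoordE HS HB B_gbasis).
  transitivity (\sum_u \sum_a \sum_b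
      (if le u a && le u b then (x a)^* * y b else 0)).
    apply: eq_bigr => u _; rewrite /gcoord rmorph_sum mulrC mulr_suml big_mkcond.
    apply: eq_bigr => a _; rewrite mulr_sumr big_mkcond.
    case: (le u a) => /=; last by rewrite big1 // => b _; case: ifP.
    by apply: eq_bigr => b _; case: ifP.
  rewrite exchange_big; apply: eq_bigr => a _.
  rewrite exchange_big; apply: eq_bigr => b _.
  rewrite -big_mkcond /= mulr_natr -sumr_const.
  by apply: eq_bigl => u; rewrite inE.
transitivity (\sum_(p : S * S) (x (sinv p.1))^* * y p.2 *
    #|[set e | idempotent_el mul e && le e (mul p.1 p.2)]|%:R).
  have sinv1_inj : injective (fun q : S * S => (sinv q.1, q.2)).
    by move=> [q1 q2] [r1 r2] [] /(can_inj (sinvK HS)) -> ->.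
  rewrite pair_bigA [RHS](reindex_inj sinv1_inj) /=.
  by apply: eq_bigr => [[a b]] _ /=; rewrite sinvK // (card_common_lower_bounds HS).
rewrite /idem_trace; under [RHS]eq_bigr => s _ do
  rewrite /cs_mul ffunE mulr_suml big_mkcond.
rewrite [RHS]exchange_big; apply: eq_bigr => p _ /=.
by rewrite -big_mkcond (big_pred1 (mul p.1 p.2)) ?ffunE.
Qed.

End Involution.

Section MinimalIdeals.
Variables (S : finType) (mul : S -> S -> S).

Lemma two_sided_idealI (I J : CS S -> Prop) :
  two_sided_ideal mul I -> two_sided_ideal mul J ->
  two_sided_ideal mul (fun z => I z /\ J z).
Proof.
case=> I0 ID IZ IL IR [J0 JD JZ JL JR]; split => //.
- by move=> x y [? ?] [? ?]; split; auto.
- by move=> c x [? ?]; split; auto.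
- by move=> a x [? ?]; split; auto.
- by move=> a x [? ?]; split; auto.
Qed.

Lemma minimal_two_sided_ideals_disjoint (I J : CS S -> Prop) :
  minimal_two_sided_ideal mul I -> minimal_two_sided_ideal mul J ->
  ~ (forall x, I x <-> J x) -> forall z, I z -> J z -> z = 0.
Proof.
move=> [idI [x [Ix x_neq0]] minI] [idJ _ minJ] I_neq_J.
have [IJ0|I_sub_J] := minI _ (two_sided_idealI idI idJ) (fun z => @proj1 _ _).
  by move=> z Iz Jz; apply: IJ0.
have [I0|J_sub_I] := minJ _ idI (fun z Iz => (I_sub_J z Iz).2).
  by move: x_neq0; rewrite (I0 _ Ix) eqxx.
by case: I_neq_J => z; split=> [/I_sub_J[] | /J_sub_I].
Qed.

Hypothesis HS : is_inverse_semigroup mul.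
Local Notation cs_star := (cs_star mul).

Lemma two_sided_ideal_star (I : CS S -> Prop) :
  two_sided_ideal mul I -> two_sided_ideal mul (fun z => I z /\ I (cs_star z)).
Proof.
case=> I0 ID IZ IL IR; split => /=.
- by rewrite cs_star0.
- by move=> x y [? ?] [? ?]; rewrite cs_starD; split; auto.
- by move=> c x [? ?]; rewrite cs_starZ; split; auto.
- by move=> a x [? ?]; rewrite (cs_star_mul HS); split; auto.
- by move=> a x [? ?]; rewrite (cs_star_mul HS); split; auto.
Qed.

Variable B : CS S -> CS S -> algC.
Hypothesis HB : sesquilinear B.
Hypothesis B_gbasis : forall s t, B (gbasis mul s) (gbasis mul t) = (s == t)%:R.

Lemma minimal_two_sided_ideal_star (I : CS S -> Prop) :
  minimal_two_sided_ideal mul I -> forall x, I x -> I (cs_star x).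
Proof.
move=> [idI [x [Ix x_neq0]] minI].
have [star0|I_star] := minI _ (two_sided_ideal_star idI) (fun z => @proj1 _ _); last first.
  by move=> y /I_star[].
have [_ _ _ IL _] := idI.
have xx0 : cs_mul mul (cs_star x) x = 0.
  by apply: star0; rewrite (cs_star_mul HS) (cs_starK HS); split; apply: IL.
case/negP: x_neq0; apply/eqP/(form_definite HS HB B_gbasis).
by rewrite (form_traceE HS HB B_gbasis) xx0 idem_trace0.
Qed.

End MinimalIdeals.

Theorem theoremC3 (S : finType) (mul : S -> S -> S)
  (HS : is_inverse_semigroup mul)
  (B : {ffun S -> algC} -> {ffun S -> algC} -> algC)
  (HB : sesquilinear B)
  (Hbasis : forall s t : S,
      B (gbasis mul s) (gbasis mul t) = (s == t)%:R)
  (I J : {ffun S -> algC} -> Prop)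
  (HI : minimal_two_sided_ideal mul I)
  (HJ : minimal_two_sided_ideal mul J)
  (HIJ : ~ (forall x, I x <-> J x)) :
  forall x y, I x -> J y -> B x y = 0.
Proof.
move=> x y Ix Jy; rewrite (form_traceE HS HB Hbasis).
have Jy_star := minimal_two_sided_ideal_star HS HB Hbasis HJ Jy.
have [[_ _ _ IL _] _ _] := HI; have [[_ _ _ _ JR] _ _] := HJ.
have IJ0 := minimal_two_sided_ideals_disjoint HI HJ HIJ.
by rewrite (IJ0 _ (IL _ _ Ix) (JR _ _ Jy_star)) idem_trace0.
Qed.
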